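(* Let $P$ and $Q$ be finitely generated graded rank one projective right $A$-modules, given as graded submodules of $Q_{\mathrm{gr}}(A)$. Then every homomorphism $P\to Q$ in $\operatorname{gr}A$ is given by left multiplication by some element of $\Bbbk(z)$, and $\operatorname{Hom}_{\operatorname{gr}A}(P,Q)$ is a free left $\Bbbk[z]$-module of rank one.
   Context: $\Bbbk$ algebraically closed of characteristic $0$; $\sigma(z)=z+1$. For $\alpha\in\Bbbk$, $f=z(z+\alpha)$, $A=A(f)$ generated by $\Bbbk[z],x,y$ with $xz=(z+1)x$, $yz=(z-1)y$, $xy=f$, $yx=\sigma^{-1}(f)$, graded by $\deg x=1,\deg y=-1,\deg z=0$; $\operatorname{gr}A$: finitely generated graded right $A$-modules with degree-$0$ maps. $Q_{\mathrm{gr}}(A)=\Bbbk(z)[x,x^{-1};\sigma]$ is the graded quotient ring. A rank one graded projective module is a nonzero finitely generated graded projective right $A$-module isomorphic to a graded submodule of $Q_{\mathrm{gr}}(A)$. $\operatorname{Hom}_{\operatorname{gr}A}(P,Q)$ is a left $\Bbbk[z]$-module via left multiplication of $\Bbbk[z]\subseteq\Bbbk(z)$ on the multiplier. *)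

From HB Require Import structures.
From mathcomp Require Import all_boot all_order all_algebra.
Set Implicit Arguments. Unset Strict Implicit. Unset Printing Implicit Defensive.
Import Order.TTheory GRing.Theory Num.Theory.
Local Open Scope ring_scope.

Notation "x %:F" := (@FracField.tofrac _ x) : ring_scope.

Section GWA.
Variable F : fieldType.

Definition Kz := {fraction {poly F}}.

Definition shiftp (m : int) (p : {poly F}) : {poly F} := p \Po ('X + (m%:~R : F)%:P).

Definition shiftK (m : int) (u : Kz) : Kz :=
  let r := repr u in (shiftp m (\n_r))%:F / (shiftp m (\d_r))%:F.

(* Homogeneous elements of Q_gr(A) = k(z)[x,x^-1;sigma] are written  a x^n,
   encoded as the pair (n, a).  Product: (a x^m)(b x^n) = a sigma^m(b) x^(m+n). *)

Definition fpol (alpha : F) : {poly F} := 'X * ('X + alpha%:P).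

(* inA alpha n a  <->  a x^n lies in A = A(f), viewed inside Q_gr(A):
   A is the subalgebra generated by k[z], x = 1 x^1, y = x^-1 f = sigma^-1(f) x^-1;
   inA describes its degree-n homogeneous components (spanned by degree-n products
   of generators). *)
Inductive inA (alpha : F) : int -> Kz -> Prop :=
| inA_poly (p : {poly F}) : inA alpha 0 (p%:F)
| inA_x : inA alpha 1 1
| inA_y : inA alpha (-1) ((shiftp (-1) (fpol alpha))%:F)
| inA_add n a b : inA alpha n a -> inA alpha n b -> inA alpha n (a + b)
| inA_mul m n a b : inA alpha m a -> inA alpha n b ->
    inA alpha (m + n) (a * shiftK m b).

(* A graded right A-module presented by its homogeneous components:
   carrier group, component predicates gcomp n, and the action
   gact n v m a  = (v of degree n) . (a x^m). *)
Record grmod := GrMod {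
  gcar : zmodType;
  gcomp : int -> gcar -> Prop;
  gact : int -> gcar -> int -> Kz -> gcar }.
Arguments gcomp : clear implicits.
Arguments gact : clear implicits.

Definition is_grmod (alpha : F) (M : grmod) : Prop :=
  (forall n, gcomp M n 0) /\
  (forall n v w, gcomp M n v -> gcomp M n w -> gcomp M n (v + w)) /\
  (forall n v, gcomp M n v -> gcomp M n (- v)) /\
  (forall n v m a, gcomp M n v -> inA alpha m a -> gcomp M (n + m) (gact M n v m a)).

Definition grhom (alpha : F) (M N : grmod) (phi : int -> gcar M -> gcar N) : Prop :=
  (forall n v, gcomp M n v -> gcomp N n (phi n v)) /\
  (forall n v w, gcomp M n v -> gcomp M n w -> phi n (v + w) = phi n v + phi n w) /\
  (forall n v m a, gcomp M n v -> inA alpha m a ->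
      phi (n + m) (gact M n v m a) = gact N n (phi n v) m a).
Arguments grhom : clear implicits.

Definition fingen (alpha : F) (M : grmod) : Prop :=
  exists gens : seq (int * gcar M),
    (forall i, (i < size gens)%N -> gcomp M (nth (0, 0) gens i).1 (nth (0, 0) gens i).2) /\
    forall n v, gcomp M n v ->
      exists a : nat -> Kz,
        (forall i, (i < size gens)%N -> inA alpha (n - (nth (0, 0) gens i).1) (a i)) /\
        v = \sum_(i < size gens)
              gact M (nth (0, 0) gens i).1 (nth (0, 0) gens i).2
                    (n - (nth (0, 0) gens i).1) (a i).

(* graded submodule of Q_gr(A) with components P n ⊆ k(z) (P = ⊕ P_n x^n) *)
Definition subQ (P : int -> Kz -> Prop) : grmod :=
  @GrMod Kz P (fun n p m a => p * shiftK n a).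

(* the graded free module ⊕_i A(d_i), with A(d)_n = A_(n+d) *)
Definition freeA (alpha : F) (ds : seq int) : grmod :=
  @GrMod 'rV[Kz]_(size ds)
    (fun n v => forall i : 'I_(size ds), inA alpha (n + ds`_i) (v 0 i))
    (fun n v m a => \row_i (v 0 i * shiftK (n + ds`_i) a)).

Definition grprojective (alpha : F) (M : grmod) : Prop :=
  exists (ds : seq int) (iota : int -> gcar M -> gcar (freeA alpha ds))
         (pi : int -> gcar (freeA alpha ds) -> gcar M),
    grhom alpha M (freeA alpha ds) iota /\ grhom alpha (freeA alpha ds) M pi /\
    forall n v, gcomp M n v -> pi n (iota n v) = v.

Definition nonzero (M : grmod) : Prop := exists n v, gcomp M n v /\ v <> 0.

Definition rank_one_sub (alpha : F) (P : int -> Kz -> Prop) : Prop :=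
  is_grmod alpha (subQ P) /\ nonzero (subQ P) /\ fingen alpha (subQ P) /\
  grprojective alpha (subQ P).

End GWA.
Arguments grhom {F} alpha M N phi.
Arguments gcomp {F} g _ _.
Arguments gact {F} g _ _ _ _.

From Stdlib Require Import Classical_Prop.
From HB Require Import structures.
From mathcomp Require Import all_boot all_order all_algebra.
Import Order.TTheory GRing.Theory Num.Theory.
Local Open Scope ring_scope.

(** Every homogeneous component of A is a space of polynomials, and in
    nonnegative degrees it contains all of them.  Hence a morphism [phi] of
    graded submodules of Q_gr(A) commutes with multiplication by enough
    polynomials to force [phi p = (phi p0 / p0) p] for a fixed nonzero [p0].
    The multipliers [c] with [c P ⊆ Q] form a k[z]-submodule of k(z); finite
    generation of [Q] bounds its denominators, so it is [I H] for an ideal [I]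
    of k[z] and some [H != 0], and finite generation of [P] makes [I] nonzero.
    A generator of the principal ideal [I] gives the basis of Hom(P, Q). *)

Lemma mulf_denom_repr {R : idomainType} (u : {fraction R}) :
  u * (\d_(repr u))%:F = (\n_(repr u))%:F.
Proof.
rewrite -{1}[u]reprK.
unlock FracField.tofrac; rewrite !piE; apply/eqmodP => /=.
rewrite FracField.equivfE /FracField.mulf /=.
rewrite !numden_Ratio ?mulf_neq0 ?oner_neq0 ?denom_ratioP //.
by rewrite !mulr1 mulrC.
Qed.

Lemma frac_commensurable {R : idomainType} (x y : {fraction R}) : x != 0 ->
  exists a b : R, b != 0 /\ y * b%:F = x * a%:F.
Proof.
move=> x_neq0; exists (\n_(repr (y / x))), (\d_(repr (y / x))).
split; first exact: denom_ratioP.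
by rewrite -mulf_denom_repr mulrA mulrCA divff // mulr1.
Qed.

Lemma frac_common_denom {R : idomainType} N (f : nat -> {fraction R}) :
  exists2 D : R, D != 0 & forall i, (i < N)%N -> exists e : R, f i * D%:F = e%:F.
Proof.
elim: N => [|N [D D_neq0 fD]]; first by exists 1; rewrite ?oner_neq0.
have dN_neq0 : \d_(repr (f N)) != 0 by exact: denom_ratioP.
exists (D * \d_(repr (f N))) => [|i]; first by rewrite mulf_neq0.
rewrite ltnS leq_eqVlt => /orP[/eqP ->|/fD[e fiD]].
  by exists (\n_(repr (f N)) * D); rewrite !tofracM mulrCA mulf_denom_repr mulrC.
by exists (e * \d_(repr (f N))); rewrite !tofracM mulrA fiD.
Qed.

Lemma poly_ideal_principal {F : fieldType} {I : {poly F} -> Prop} :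
  (forall g h, I g -> I (h * g)) -> (forall g h, I g -> I h -> I (g + h)) ->
  (exists2 g, g != 0 & I g) ->
  exists g0, [/\ g0 != 0, I g0 & forall g, I g -> g0 %| g].
Proof.
move=> Imul Iadd [g g_neq0 Ig].
have [n] := ubnP (size g); elim: n g g_neq0 Ig => // n IHn g g_neq0 Ig.
rewrite ltnS => size_g.
have [[h Ih g_ndvd_h]|no_ndvd] := classic (exists2 h, I h & ~~ (g %| h)).
  apply: (IHn (h %% g)).
  - by apply: contra g_ndvd_h => /eqP/modp_eq0P.
  - have -> : h %% g = h + - (h %/ g) * g.
      by rewrite {2}(divp_eq h g) mulNr addrAC subrr add0r.
    by apply: Iadd => //; apply: Imul.
  - exact: leq_trans (ltn_modpN0 _ g_neq0) size_g.
exists g; split=> // h Ih; apply: contraT => g_ndvd_h.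
by case: no_ndvd; exists h.
Qed.

Lemma common_nat_shift (m n : int) : exists d1 d2 : nat, m + d1%:Z = n + d2%:Z.
Proof.
have [le_mn|lt_nm] := lerP m n.
  by exists `|n - m|%N, 0%N; rewrite gez0_abs ?subr_ge0 // addr0 subrKC.
by exists 0%N, `|m - n|%N; rewrite gez0_abs ?subr_ge0 ?ltW // addr0 subrKC.
Qed.

Section Shift.
Variable k : fieldType.
Local Notation K := (Kz k).

Lemma shiftpM m (p q : {poly k}) : shiftp m (p * q) = shiftp m p * shiftp m q.
Proof. exact: comp_polyM. Qed.

Lemma shiftp1 m : shiftp m (1 : {poly k}) = 1.
Proof. by rewrite /shiftp -polyC1 comp_polyC. Qed.

Lemma shiftpA m n (p : {poly k}) : shiftp m (shiftp n p) = shiftp (n + m) p.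
Proof.
rewrite /shiftp -comp_polyA comp_polyD comp_polyX comp_polyC -addrA -polyCD.
by rewrite -intrD [n + m]addrC.
Qed.

Lemma shiftp0 (p : {poly k}) : shiftp 0 p = p.
Proof. by rewrite /shiftp /= addr0 comp_polyXr. Qed.

Lemma shiftpNK m : cancel (shiftp m) (@shiftp k (- m)).
Proof. by move=> p; rewrite shiftpA subrr shiftp0. Qed.

Lemma shiftpKN m : cancel (@shiftp k (- m)) (shiftp m).
Proof. by move=> p; rewrite shiftpA addNr shiftp0. Qed.

Lemma shiftp_eq0 m (p : {poly k}) : (shiftp m p == 0) = (p == 0).
Proof.
apply/eqP/eqP => [|->]; last exact: comp_poly0.
by move/(congr1 (shiftp (- m))); rewrite shiftpNK /shiftp comp_poly0.
Qed.

Lemma shiftK_tofrac m (p : {poly k}) : shiftK m p%:F = (shiftp m p)%:F.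
Proof.
have := mulf_denom_repr (p%:F : K); rewrite /shiftK.
rewrite -tofracM => /eqP; rewrite tofrac_eq => /eqP <-.
by rewrite shiftpM tofracM mulfK // tofrac_eq0 shiftp_eq0 denom_ratioP.
Qed.

End Shift.

Section GradedSubmodules.
Context {k : fieldType} {alpha : k}.
Local Notation K := (Kz k).
Implicit Types (Q : int -> K -> Prop).

Lemma inA_polyE {n a} : inA alpha n a -> exists p, a = p%:F.
Proof.
elim=> [p|||{}n {}a b _ [p ->] _ [q ->]|m {}n {}a b _ [p ->] _ [q ->]].
- by exists p.
- by exists 1; rewrite tofrac1.
- by eexists.
- by exists (p + q); rewrite tofracD.
- by exists (p * shiftp m q); rewrite shiftK_tofrac tofracM.
Qed.

Lemma inA_nat (j : nat) (p : {poly k}) : inA alpha j p%:F.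
Proof.
elim: j p => [|j IHj] p; first exact: inA_poly.
have := inA_mul (IHj p) (inA_x alpha).
by rewrite -tofrac1 shiftK_tofrac shiftp1 tofrac1 mulr1 -addn1 PoszD.
Qed.

Lemma fpol_neq0 : fpol alpha != 0.
Proof. by rewrite mulf_neq0 ?polyX_eq0 // monic_neq0 // monicXaddC. Qed.

Lemma inA_negz (j : nat) : exists p, p != 0 /\ inA alpha (- j%:Z) p%:F.
Proof.
elim: j => [|j [p [p_neq0 Ap]]].
  by exists 1; split; [exact: oner_neq0|exact: inA_nat].
have := inA_mul Ap (inA_y alpha); rewrite shiftK_tofrac -tofracM => Apy.
exists (p * shiftp (- j%:Z) (shiftp (-1) (fpol alpha))); split.
  by rewrite mulf_neq0 ?shiftp_eq0 ?fpol_neq0.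
by rewrite -addn1 PoszD opprD.
Qed.

Lemma inA_neq0 (j : int) : exists p, p != 0 /\ inA alpha j p%:F.
Proof.
case: j => j; first by exists 1; split; [exact: oner_neq0|exact: inA_nat].
by rewrite NegzE; apply: inA_negz.
Qed.

Lemma subQ_mulpoly {Q d x} h :
  is_grmod alpha (subQ Q) -> Q d x -> Q d (h%:F * x).
Proof.
case=> _ [_ [_ Qact]] Qx.
have := Qact d x 0 (shiftp (- d) h)%:F Qx (inA_poly _ _).
by rewrite /= addr0 shiftK_tofrac shiftpKN mulrC.
Qed.

Lemma subQ_sum {Q n N} {f : 'I_N -> K} :
  is_grmod alpha (subQ Q) -> (forall i, Q n (f i)) -> Q n (\sum_i f i).
Proof.
case=> Q0 [QD _] Qf.
by apply: (big_ind (Q n)); [exact: Q0|exact: QD|move=> i _; exact: Qf].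
Qed.

Lemma subQ_neq0 Q d :
  is_grmod alpha (subQ Q) -> nonzero (subQ Q) -> exists q, q != 0 /\ Q d q.
Proof.
move=> [_ [_ [_ Qact]]] [n [q [Qq /eqP q_neq0]]].
have [a [a_neq0 Aa]] := inA_neq0 (d - n).
have := Qact n q (d - n) a%:F Qq Aa; rewrite /= subrKC shiftK_tofrac => Qqa.
by exists (q * (shiftp n a)%:F); rewrite mulf_neq0 ?tofrac_eq0 ?shiftp_eq0.
Qed.

Lemma fingen_denom Q : fingen alpha (subQ Q) ->
  exists2 D : {poly k}, D != 0 &
    forall n q, Q n q -> exists e : {poly k}, D%:F * q = e%:F.
Proof.
case=> gens [_ Qgen].
have [D D_neq0 gensD] :=
  frac_common_denom (size gens) (fun i => (nth (0, 0) gens i).2).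
exists D => // n q /Qgen[a [Aa ->]]; rewrite mulr_sumr.
apply: (big_ind (fun x => exists e, x = e%:F)).
- by exists 0; rewrite tofrac0.
- by move=> _ _ [e1 ->] [e2 ->]; exists (e1 + e2); rewrite tofracD.
move=> i _ /=; have [e gDe] := gensD i (ltn_ord i).
have [p ->] := inA_polyE (Aa i (ltn_ord i)).
rewrite shiftK_tofrac mulrA [D%:F * _]mulrC gDe -tofracM.
by eexists.
Qed.

Lemma subQ_common_multiplier Q N (f : nat -> int * K) :
  is_grmod alpha (subQ Q) -> nonzero (subQ Q) ->
  exists c : K, c != 0 /\ forall i, (i < N)%N -> Q (f i).1 (c * (f i).2).
Proof.
move=> Qmod Qnz; elim: N => [|N [c [c_neq0 Qc]]].
  by exists 1; rewrite oner_neq0.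
have [cf0|cf_neq0] := eqVneq (c * (f N).2) 0.
  exists c; split=> // i; rewrite ltnS leq_eqVlt => /orP[/eqP ->|]; last exact: Qc.
  by rewrite cf0; case: Qmod => Q0 _; apply: Q0.
have [q [q_neq0 Qq]] := subQ_neq0 Q (f N).1 Qmod Qnz.
have [a [b [b_neq0 cfb_qa]]] := frac_commensurable q (c * (f N).2) q_neq0.
have bF_neq0 : b%:F != 0 :> K by rewrite tofrac_eq0 b_neq0.
exists (b%:F * c); split; first exact: (mulf_neq0 bF_neq0 c_neq0).
move=> i; rewrite -mulrA ltnS leq_eqVlt => /orP[/eqP ->|/Qc Qci].
  by rewrite [b%:F * _]mulrC cfb_qa [q * _]mulrC; exact: subQ_mulpoly Qmod Qq.
exact: subQ_mulpoly Qmod Qci.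
Qed.

End GradedSubmodules.

Section Multipliers.
Context {k : fieldType} {alpha : k} {P Q : int -> Kz k -> Prop}.
Local Notation K := (Kz k).
Hypotheses (Qmod : is_grmod alpha (subQ Q)) (Qnz : nonzero (subQ Q)).
Hypotheses (Qfg : fingen alpha (subQ Q)) (Pfg : fingen alpha (subQ P)).

(* Write [q b = p0 a] with polynomials [a], [b]; after shifting to a common
   nonnegative degree both act through A, so [phi] commutes with them. *)
Lemma grhom_subQ_lmul {phi n0 p0} :
  grhom alpha (subQ P) (subQ Q) phi -> P n0 p0 -> p0 != 0 ->
  forall m q, P m q -> phi m q = (phi n0 p0 / p0) * q.
Proof.
case=> _ [_ phi_act] Pp0 p0_neq0 m q Pq.
have [a [b [b_neq0 qb_p0a]]] := frac_commensurable p0 q p0_neq0.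
have [d1 [d2 Ed]] := common_nat_shift m n0.
have := phi_act m q d1 (shiftp (- m) b)%:F Pq (inA_nat d1 _).
have := phi_act n0 p0 d2 (shiftp (- n0) a)%:F Pp0 (inA_nat d2 _).
rewrite /= !shiftK_tofrac !shiftpKN Ed qb_p0a => -> phi_qb.
have bF_neq0 : b%:F != 0 :> K by rewrite tofrac_eq0.
apply: (mulIf bF_neq0).
by rewrite -phi_qb -(mulrA _ q) qb_p0a (mulrA _ p0) (divfK p0_neq0).
Qed.

Definition multiplier (c : K) := forall n p, P n p -> Q n (c * p).

Lemma grhom_lmul {c} :
  multiplier c -> grhom alpha (subQ P) (subQ Q) (fun _ p => c * p).
Proof.
move=> cPQ; split=> //; split=> [n v w _ _|n v m a _ _ /=]; first exact: mulrDr.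
exact: mulrA.
Qed.

Lemma grhom_multiplier {phi c} : grhom alpha (subQ P) (subQ Q) phi ->
  (forall n p, P n p -> phi n p = c * p) -> multiplier c.
Proof. by case=> phiPQ _ phiE n p Pp; rewrite -(phiE n p Pp); apply: phiPQ. Qed.

Lemma multiplier_mulpoly {c} g : multiplier c -> multiplier (g%:F * c).
Proof. by move=> cPQ n p Pp; rewrite -mulrA; apply: subQ_mulpoly Qmod (cPQ n p Pp). Qed.

Lemma multiplierD {c1 c2} : multiplier c1 -> multiplier c2 -> multiplier (c1 + c2).
Proof.
case: Qmod => _ [QD _] c1PQ c2PQ n p Pp.
by rewrite mulrDl; apply: QD; [apply: c1PQ|apply: c2PQ].
Qed.

Lemma multiplier_bounded {n0 p0} : P n0 p0 -> p0 != 0 ->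
  exists2 H : K, H != 0 & forall c, multiplier c -> exists g, c = g%:F * H.
Proof.
move=> Pp0 p0_neq0; have [D D_neq0 QD] := fingen_denom Q Qfg.
have Dp0_neq0 : D%:F * p0 != 0 by rewrite mulf_neq0 ?tofrac_eq0.
exists (D%:F * p0)^-1 => [|c cPQ]; first by rewrite invr_eq0.
have [e De] := QD _ _ (cPQ _ _ Pp0).
by exists e; rewrite -De mulrCA mulfK.
Qed.

Lemma multiplier_neq0 : exists c, c != 0 /\ multiplier c.
Proof.
case: Pfg => gens [_ Pgen].
have [c [c_neq0 Qc]] :=
  subQ_common_multiplier Q (size gens) (nth (0, 0) gens) Qmod Qnz.
exists c; split=> // n p /Pgen[a [Aa ->]]; rewrite mulr_sumr.
apply: (subQ_sum Qmod) => i /=; case: Qmod => _ [_ [_ Qact]].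
have := Qact _ _ _ _ (Qc i (ltn_ord i)) (Aa i (ltn_ord i)).
by rewrite /= subrKC mulrA.
Qed.

Lemma multiplier_basis {n0 p0} : P n0 p0 -> p0 != 0 ->
  exists c0, [/\ c0 != 0, multiplier c0 &
    forall c, multiplier c -> exists g : {poly k}, c = g%:F * c0].
Proof.
move=> Pp0 p0_neq0; have [H H_neq0 Hbound] := multiplier_bounded Pp0 p0_neq0.
pose I g := multiplier (g%:F * H).
have I_mul g h : I g -> I (h * g).
  by rewrite /I tofracM -mulrA; apply: multiplier_mulpoly.
have I_add g h : I g -> I h -> I (g + h).
  by rewrite /I tofracD mulrDl; apply: multiplierD.
have I_neq0 : exists2 g, g != 0 & I g.
  have [c [c_neq0 cPQ]] := multiplier_neq0; have [g cE] := Hbound c cPQ.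
  exists g; last by rewrite /I -cE.
  by apply: contraNneq c_neq0 => g0; rewrite cE g0 tofrac0 mul0r.
have [g0 [g0_neq0 Ig0 g0_dvd]] := poly_ideal_principal I_mul I_add I_neq0.
have c0_neq0 : g0%:F * H != 0 by rewrite mulf_neq0 ?tofrac_eq0.
exists (g0%:F * H); split=> // c cPQ; have [g cE] := Hbound c cPQ.
have Ig : I g by rewrite /I -cE.
by exists (g %/ g0); rewrite cE mulrA -tofracM divpK ?g0_dvd.
Qed.

End Multipliers.

Theorem proposition3p23 (k : closedFieldType) (hchar : [pchar k] =i pred0)
    (alpha : k) (P Q : int -> Kz k -> Prop) :
  rank_one_sub alpha P -> rank_one_sub alpha Q ->
  (forall phi : int -> Kz k -> Kz k,
     grhom alpha (subQ P) (subQ Q) phi ->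
     exists c : Kz k, forall n p, P n p -> phi n p = c * p) /\
  (exists c0 : Kz k,
     grhom alpha (subQ P) (subQ Q) (fun _ p => c0 * p) /\
     forall phi : int -> Kz k -> Kz k,
       grhom alpha (subQ P) (subQ Q) phi ->
       exists! g : {poly k}, forall n p, P n p -> phi n p = ((g%:F) * c0) * p).
Proof.
move=> [_ [[n0 [p0 [Pp0 /eqP p0_neq0]]] [Pfg _]]] [Qmod [Qnz [Qfg _]]].
have lmulE phi : grhom alpha (subQ P) (subQ Q) phi ->
    forall n p, P n p -> phi n p = (phi n0 p0 / p0) * p.
  by move=> phi_hom; apply: grhom_subQ_lmul phi_hom Pp0 p0_neq0.
split=> [phi /lmulE phiE|]; first by eexists; exact: phiE.
have [c0 [c0_neq0 c0PQ c0_basis]] := multiplier_basis Qmod Qnz Qfg Pfg Pp0 p0_neq0.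
exists c0; split=> [|phi phi_hom]; first exact: grhom_lmul c0PQ.
have [g cE] := c0_basis _ (grhom_multiplier phi_hom (lmulE _ phi_hom)).
exists g; split=> [n p Pp|g' g'E]; first by rewrite (lmulE _ phi_hom n p Pp) cE.
have := g'E n0 p0 Pp0; rewrite (lmulE _ phi_hom n0 p0 Pp0) cE.
by move/(mulIf p0_neq0)/(mulIf c0_neq0)/eqP; rewrite tofrac_eq => /eqP.
Qed.
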